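(* Let $\mathbf{x}\in\mathrm{Mat}_{m\times n}(\mathbb{C}^* )$ and $i\in[m-1]$. Then $s_i(\mathbf{x})=R_i(\mathbf{x})$, where $s_i(\mathbf{x})=e_i^{\varepsilon_i(\mathbf{x})/\varphi_i(\mathbf{x})}(\mathbf{x})=e_i^{\pi_{i+1}/\pi_i}(\mathbf{x})$.
   Context: Rows $\mathbf{x}_i=(x_i^1,\dots,x_i^n)$, $\pi_i=\prod_{j=1}^nx_i^j$. For $u,v\in(\mathbb{C}^* )^n$, $\sigma^j(u,v;c)=\sum_{r=1}^nc^{\mathbb{1}_{r\le j}}v^1\cdots v^{r-1}u^{r+1}\cdots u^n$, $\sigma(u,v)=\sigma^j(u,v;1)$. The basic $\mathrm{GL}_m$-geometric crystal structure on $m\times n$ matrices (the product $(X_m)^n$ over columns) has $\varepsilon_i(\mathbf{x})=\pi_{i+1}/\sigma(\mathbf{x}_i,\mathbf{x}_{i+1})$, $\varphi_i(\mathbf{x})=\pi_i/\sigma(\mathbf{x}_i,\mathbf{x}_{i+1})$, and $e_i^c$ fixes rows other than $i,i+1$ and replaces $x_i^j$ by $x_i^j\sigma^j/\sigma^{j-1}$ and $x_{i+1}^j$ by $x_{i+1}^j\sigma^{j-1}/\sigma^j$ with $\sigma^k=\sigma^k(\mathbf{x}_i,\mathbf{x}_{i+1};c)$. The geometric $R$-matrix is $R((x_1,\dots,x_n),(y_1,\dots,y_n))=((y_1',\dots,y_n'),(x_1',\dots,x_n'))$ with $y'_j=y_j\kappa_{j+1}/\kappa_j$, $x'_j=x_j\kappa_j/\kappa_{j+1}$,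 $\kappa_r=\sum_{k=0}^{n-1}y_r\cdots y_{r+k-1}x_{r+k+1}\cdots x_{r+n-1}$ (subscripts mod $n$); $R_i$ replaces rows $(\mathbf{x}_i,\mathbf{x}_{i+1})$ by $(\mathbf{x}'_{i+1},\mathbf{x}'_i)$, where $(\mathbf{x}'_{i+1},\mathbf{x}'_i)=R(\mathbf{x}_i,\mathbf{x}_{i+1})$. *)

(* The complex numbers are R[i] (mathcomp-real-closed's
   complex) for an arbitrary  R : realType  (MathComp-Analysis reals). *)
From HB Require Import structures.
From mathcomp Require Import all_boot all_order all_algebra.
From mathcomp Require Import complex reals.
Set Implicit Arguments. Unset Strict Implicit. Unset Printing Implicit Defensive.
Import Order.TTheory GRing.Theory Num.Theory.
Local Open Scope ring_scope.

(* Indices are 0-based: row i of the paper is row i-1 here, column j of the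
   paper is column j-1 here.  Rows of an m x n matrix are vectors 'I_n -> F. *)

Section GeomCrystal.
Variable F : fieldType.
Variable n : nat.

(* sigma^j(u,v;c) = sum_{r=1}^n c^{1_{r<=j}} v^1..v^{r-1} u^{r+1}..u^n,
   written 0-based: r ranges over 'I_n, the indicator is [r < j],
   v over indices k < r, u over indices r < k < n. *)
Definition sigmaj (u v : 'I_n -> F) (c : F) (j : nat) : F :=
  \sum_(r < n) (if (r < j)%N then c else 1) *
    ((\prod_(k < n | (k < r)%N) v k) * (\prod_(k < n | (r < k)%N) u k)).

Definition sigma (u v : 'I_n -> F) : F := sigmaj u v 1 0.

Definition modn_ord (a : nat) : 'I_n.+1 := inord (a %% n.+1).
End GeomCrystal.

Section Matrices.
Variable F : fieldType.

Definition natv n (u : 'I_n -> F) (k : nat) : F :=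
  if insub k is Some o then u o else 0.

Definition rowv m n (x : 'M[F]_(m, n)) (i : nat) : 'I_n -> F :=
  fun j => if insub i is Some a then x a j else 0.

Definition piRow m n (x : 'M[F]_(m, n)) (i : nat) : F := \prod_(j < n) rowv x i j.

Definition eps_i m n (x : 'M[F]_(m, n)) (i : nat) : F :=
  piRow x i.+1 / sigma (rowv x i) (rowv x i.+1).
Definition phi_i m n (x : 'M[F]_(m, n)) (i : nat) : F :=
  piRow x i / sigma (rowv x i) (rowv x i.+1).

(* e_i^c: rows other than i, i+1 fixed;
   x_i^j -> x_i^j sigma^j / sigma^{j-1},  x_{i+1}^j -> x_{i+1}^j sigma^{j-1}/sigma^j,
   with paper column j = 0-based column j-1, sigma^k = sigma^k(x_i,x_{i+1};c). *)
Definition e_i m n (i : nat) (c : F) (x : 'M[F]_(m, n)) : 'M[F]_(m, n) :=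
  \matrix_(a < m, b < n)
    let s k := sigmaj (rowv x i) (rowv x i.+1) c k in
    if (a == i :> nat) then x a b * s b.+1 / s b
    else if (a == i.+1 :> nat) then x a b * s b / s b.+1
    else x a b.

Definition s_i m n (i : nat) (x : 'M[F]_(m, n)) : 'M[F]_(m, n) :=
  e_i i (eps_i x i / phi_i x i) x.

Definition kappa n (x y : 'I_n -> F) (r : nat) : F :=
  \sum_(k < n)
    (\prod_(t < n | (t < k)%N) natv y ((r + t) %% n)) *
    (\prod_(t < n | (k < t)%N) natv x ((r + t) %% n)).

Definition Rmat_fst n (x y : 'I_n -> F) : 'I_n -> F :=
  fun j => y j * kappa x y j.+1 / kappa x y j.
Definition Rmat_snd n (x y : 'I_n -> F) : 'I_n -> F :=
  fun j => x j * kappa x y j / kappa x y j.+1.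

Definition R_i m n (i : nat) (x : 'M[F]_(m, n)) : 'M[F]_(m, n) :=
  \matrix_(a < m, b < n)
    if (a == i :> nat) then Rmat_fst (rowv x i) (rowv x i.+1) b
    else if (a == i.+1 :> nat) then Rmat_snd (rowv x i) (rowv x i.+1) b
    else x a b.
End Matrices.

(* Write u, v for rows i, i+1 and c = pi_{i+1}/pi_i, so that c pi_u = pi_v.  The
   key identity is  kappa_j (v_1 ... v_j) = sigma^j(u, v; c) (u_1 ... u_j)  for
   0 <= j <= n.  It holds at j = 0 since kappa_0 = sigma^0, and it propagates
   because both sides obey the same recurrence: rotating the cyclic products
   gives  v_j kappa_{j+1} = u_j kappa_j + pi_v - pi_u,  while the coefficient c
   reaches one more summand of sigma^{j+1}.  Hence kappa_{j+1}/kappa_j equals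
   (u_j/v_j) sigma^{j+1}/sigma^j, which turns the geometric R-matrix into e_i^c. *)
From HB Require Import structures.
From mathcomp Require Import all_boot all_order all_algebra.
From mathcomp Require Import complex reals.
From mathcomp Require Import ring.
Import Order.TTheory GRing.Theory Num.Theory.
Local Open Scope ring_scope.

Lemma big_ord_gtn (R : Type) (idx : R) (op : Monoid.law idx) n k (f : nat -> R) :
  \big[op/idx]_(t < n | (k < t)%N) f t = \big[op/idx]_(k.+1 <= t < n) f t.
Proof. by rewrite (big_nat_widenl _ 0) // big_mkord. Qed.

Section CyclicProducts.
Context {F : fieldType}.

Lemma natv_ord n (w : 'I_n -> F) (t : 'I_n) : natv w t = w t.
Proof. by rewrite /natv valK. Qed.

Context {N : nat}.
Local Notation n := N.+1.
Implicit Types u v w : 'I_n -> F.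

Definition cycv w (s : nat) : F := natv w (s %% n).

Lemma cycv_small w j : (j < n)%N -> cycv w j = natv w j.
Proof. by move=> jn; rewrite /cycv modn_small. Qed.

Lemma prod_cycv_shift w j :
  \prod_(0 <= t < n) cycv w (j + t) = \prod_(k < n) w k.
Proof.
elim: j => [|j IH].
  by rewrite big_mkord; apply: eq_bigr => t _; rewrite add0n cycv_small ?natv_ord.
rewrite -IH big_nat_recr // big_nat_recl // mulrC /cycv addn0 addSnnS modnDr.
by congr (_ * _); apply: eq_bigr => t _; rewrite addSnnS.
Qed.

Definition kappa_term u v (r k : nat) : F :=
  (\prod_(0 <= t < k) cycv v (r + t)) * (\prod_(k.+1 <= t < n) cycv u (r + t)).

Lemma kappa_sum u v r : kappa u v r = \sum_(k < n) kappa_term u v r k.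
Proof.
apply: eq_bigr => k _; rewrite (@big_ord_gtn _ _ _ _ _ (fun t => cycv u (r + t))).
rewrite -(big_ord_widen _ (fun t => cycv v (r + t)) (ltnW (ltn_ord k))).
by rewrite /kappa_term big_mkord.
Qed.

Lemma kappa_term_first u v j : cycv u j * kappa_term u v j 0 = \prod_(k < n) u k.
Proof.
rewrite /kappa_term big_geq // mul1r -(prod_cycv_shift u j).
by rewrite [RHS]big_nat_recl // addn0 big_add1.
Qed.

Lemma kappa_term_last u v j : cycv v j * kappa_term u v j.+1 N = \prod_(k < n) v k.
Proof.
rewrite /kappa_term [X in _ * (_ * X)]big_geq // mulr1 -(prod_cycv_shift v j).
rewrite big_nat_recl // addn0; congr (_ * _).
by apply: eq_bigr => t _; rewrite addSnnS.
Qed.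

Lemma kappa_term_shift u v j k : (k < N)%N ->
  cycv v j * kappa_term u v j.+1 k = cycv u j * kappa_term u v j k.+1.
Proof.
move=> kN; rewrite /kappa_term [X in _ = _ * (X * _)]big_nat_recl //.
rewrite [X in _ = _ * (_ * X)]big_add1 [X in _ * (_ * X) = _]big_nat_recr //=.
have -> : cycv u (j.+1 + N) = cycv u j by rewrite /cycv addSnnS modnDr.
have shift_arg w a b :
    \prod_(a <= t < b) cycv w (j.+1 + t) = \prod_(a <= t < b) cycv w (j + t.+1).
  by apply: eq_bigr => t _; rewrite addSnnS.
by rewrite !shift_arg addn0; ring.
Qed.

Lemma kappaS u v j :
  cycv v j * kappa u v j.+1 =
  cycv u j * kappa u v j + \prod_(k < n) v k - \prod_(k < n) u k.
Proof.
rewrite !kappa_sum big_ord_recr [X in cycv u j * X]big_ord_recl /= !mulrDr.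
rewrite kappa_term_last kappa_term_first !mulr_sumr.
rewrite (eq_bigr (fun k : 'I_N => cycv u j * kappa_term u v j (bump 0 k))).
  by ring.
by move=> k _; rewrite kappa_term_shift.
Qed.

Definition prefix_prod w j : F := \prod_(k < n | (k < j)%N) w k.
Definition suffix_prod w j : F := \prod_(k < n | (j < k)%N) w k.

Lemma prefix_prodE w j : (j <= n)%N -> prefix_prod w j = \prod_(0 <= k < j) natv w k.
Proof.
move=> jn; rewrite /prefix_prod big_mkord (big_ord_widen _ _ jn).
by apply: eq_bigr => k _; rewrite natv_ord.
Qed.

Lemma prefix_prod0 w : prefix_prod w 0 = 1.
Proof. by rewrite /prefix_prod big_pred0. Qed.

Lemma prefix_prodS w j : (j < n)%N -> prefix_prod w j.+1 = prefix_prod w j * natv w j.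
Proof.
by move=> jn; rewrite (prefix_prodE _ _ jn) (prefix_prodE _ _ (ltnW jn)) big_nat_recr.
Qed.

Lemma suffix_prodE w j : suffix_prod w j = \prod_(j.+1 <= k < n) natv w k.
Proof.
rewrite -(@big_ord_gtn _ _ _ _ _ (natv w)).
by apply: eq_bigr => k _; rewrite natv_ord.
Qed.

Lemma prefix_suffix_prod w j : (j < n)%N ->
  prefix_prod w j * natv w j * suffix_prod w j = \prod_(k < n) w k.
Proof.
move=> jn; rewrite -prefix_prodS // prefix_prodE // suffix_prodE.
rewrite -(@big_cat_nat _ _ _ j.+1) //= big_mkord.
by apply: eq_bigr => k _; rewrite natv_ord.
Qed.

Lemma prefix_prod_neq0 w j : (forall k, w k != 0) -> prefix_prod w j != 0.
Proof. by move=> hw; apply/prodf_neq0. Qed.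

Lemma kappa0 u v c : kappa u v 0 = sigmaj u v c 0.
Proof.
apply: eq_bigr => k _; rewrite ltn0 mul1r.
by congr (_ * _); apply: eq_bigr => t _; rewrite add0n modn_small // natv_ord.
Qed.

Definition sigma_term u v (r : nat) : F := prefix_prod v r * suffix_prod u r.

Lemma sigmaj_split u v c j : sigmaj u v c j =
  \sum_(r < n) sigma_term u v r + (c - 1) * \sum_(r < n | (r < j)%N) sigma_term u v r.
Proof.
rewrite /sigmaj [X in _ = _ + _ * X]big_mkcond mulr_sumr -big_split.
apply: eq_bigr => r _ /=.
by case: ifP => _; rewrite /sigma_term /prefix_prod /suffix_prod; ring.
Qed.

Lemma sigmajS u v c j : (j < n)%N ->
  sigmaj u v c j.+1 = sigmaj u v c j + (c - 1) * sigma_term u v j.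
Proof.
move=> jn; rewrite !sigmaj_split -(big_ord_widen _ (sigma_term u v) jn).
rewrite -(big_ord_widen _ (sigma_term u v) (ltnW jn)).
by rewrite [\sum_(i < j.+1) _]big_ord_recr /= mulrDr addrA.
Qed.

Context {u v : 'I_n -> F} {c : F}.
Hypothesis cuv : c * \prod_(k < n) u k = \prod_(k < n) v k.

Lemma kappa_prefix_prod j : (j <= n)%N ->
  kappa u v j * prefix_prod v j = sigmaj u v c j * prefix_prod u j.
Proof.
elim: j => [_ | j IH jn]; first by rewrite !prefix_prod0 (kappa0 u v c).
have rec := kappaS u v j; rewrite !cycv_small // in rec.
rewrite !prefix_prodS // sigmajS //.
transitivity (prefix_prod v j * (natv v j * kappa u v j.+1)); first by ring.
rewrite rec -cuv -(prefix_suffix_prod u _ jn).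
transitivity (natv u j * (kappa u v j * prefix_prod v j) + (c - 1) * prefix_prod v j *
              (prefix_prod u j * natv u j * suffix_prod u j)); first by ring.
by rewrite IH ?(ltnW jn) /sigma_term; ring.
Qed.

Hypotheses (hu : forall k, u k != 0) (hv : forall k, v k != 0).
Hypothesis hs : forall j, (j <= n)%N -> sigmaj u v c j != 0.

Lemma kappa_sigmaj j : (j <= n)%N ->
  kappa u v j = sigmaj u v c j * prefix_prod u j / prefix_prod v j.
Proof.
move=> jn; rewrite -(kappa_prefix_prod _ jn) mulfK //.
exact: prefix_prod_neq0.
Qed.

Lemma kappa_ratio (b : 'I_n) :
  kappa u v b.+1 / kappa u v b = u b / v b * (sigmaj u v c b.+1 / sigmaj u v c b).
Proof.
rewrite (kappa_sigmaj _ (ltn_ord b)) (kappa_sigmaj _ (ltnW (ltn_ord b))).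
rewrite !prefix_prodS // !natv_ord.
by field; rewrite hs ?hv ?prefix_prod_neq0 // ltnW.
Qed.

Lemma Rmat_fst_sigmaj (b : 'I_n) :
  Rmat_fst u v b = u b * sigmaj u v c b.+1 / sigmaj u v c b.
Proof.
rewrite /Rmat_fst -mulrA kappa_ratio.
by field; rewrite hv hs // ltnW.
Qed.

Lemma Rmat_snd_sigmaj (b : 'I_n) :
  Rmat_snd u v b = v b * sigmaj u v c b / sigmaj u v c b.+1.
Proof.
rewrite /Rmat_snd -mulrA -invf_div kappa_ratio.
by field; rewrite hu hv !hs // ltnW.
Qed.

End CyclicProducts.

Section Matrices.
Context {F : fieldType} {m n : nat}.
Implicit Type x : 'M[F]_(m, n).

Lemma rowv_ord x (a : 'I_m) j : rowv x a j = x a j.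
Proof. by rewrite /rowv valK. Qed.

Lemma rowv_neq0 x k : (k < m)%N -> (forall a b, x a b != 0) -> forall j, rowv x k j != 0.
Proof. by move=> km hx j; rewrite -[k]/(nat_of_ord (Ordinal km)) rowv_ord. Qed.

Lemma piRow_neq0 x k : (k < m)%N -> (forall a b, x a b != 0) -> piRow x k != 0.
Proof. by move=> km hx; apply/prodf_neq0 => j _; exact: rowv_neq0. Qed.

Lemma eps_div_phi x i : sigma (rowv x i) (rowv x i.+1) != 0 -> piRow x i != 0 ->
  eps_i x i / phi_i x i = piRow x i.+1 / piRow x i.
Proof. by move=> hsig hpi; rewrite /eps_i /phi_i; field; rewrite hsig hpi. Qed.

End Matrices.

Lemma e_i_eq_R_i (F : fieldType) m n (x : 'M[F]_(m, n)) i c :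
  (i.+1 < m)%N -> (forall a b, x a b != 0) -> c * piRow x i = piRow x i.+1 ->
  (forall j, (j <= n)%N -> sigmaj (rowv x i) (rowv x i.+1) c j != 0) ->
  e_i i c x = R_i i x.
Proof.
move=> hi hx cuv hs; apply/matrixP => a b; rewrite !mxE /=.
case: n x b hx cuv hs => [|N] x b hx cuv hs; first by case: b.
have hu := rowv_neq0 x i (ltnW hi) hx; have hv := rowv_neq0 x i.+1 hi hx.
case: eqP => [ai | _]; first by rewrite (Rmat_fst_sigmaj cuv hu hv hs) -ai rowv_ord.
by case: eqP => [ai1 | //]; rewrite (Rmat_snd_sigmaj cuv hu hv hs) -ai1 rowv_ord.
Qed.

Theorem proposition6p1 (R : realType) (m n : nat) (x : 'M[R[i]]_(m, n))
  (i : nat) (hi : (i.+1 < m)%N)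
  (hx : forall a b, x a b != 0)
  (* both sides are defined at x: *)
  (hsig : sigma (rowv x i) (rowv x i.+1) != 0)
  (hsigj : forall j : nat, (j <= n)%N ->
     sigmaj (rowv x i) (rowv x i.+1) (eps_i x i / phi_i x i) j != 0)
  (hkap : forall r : nat, (r <= n)%N -> kappa (rowv x i) (rowv x i.+1) r != 0) :
  s_i i x = R_i i x /\ eps_i x i / phi_i x i = piRow x i.+1 / piRow x i.
Proof.
have pi_neq0 := piRow_neq0 x i (ltnW hi) hx.
have c_eq := eps_div_phi x i hsig pi_neq0.
split => //; apply: e_i_eq_R_i hsigj => //.
by rewrite c_eq divfK.
Qed.
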